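(* Let $n\ge1$. If $p\in\mathcal{T}_n$, then $\iota(p)\notin\{1,2\}^n$.
   Context: $\Gamma=\{0,1,2,3\}$. $C=\{(a,b,c)\in\mathbb{R}^3: a\ge b\ge c>0,\ a+b+c=1\}$, $C^*=\{(a,b,c)\in C: a\ne1/2\}$. Regions of $C^*$: $R_0=\{a<1/2\}$, $R_1=\{2a-1\ge2b,\ a>1/2\}$, $R_2=\{2b>2a-1\ge2c,\ a>1/2\}$, $R_3=\{2c>2a-1,\ a>1/2\}$. Sorted pedal map $P:C^*\to C$: $P(a,b,c)=(1-2c,1-2b,1-2a)$ on $R_0$, $(2a-1,2b,2c)$ on $R_1$, $(2b,2a-1,2c)$ on $R_2$, $(2b,2c,2a-1)$ on $R_3$. $\mathcal{T}_n=\{p\in C: P^j(p)\text{ defined for }0\le j<n,\ P^n(p)=p,\ P^d(p)\ne p\text{ for }1\le d<n\}$. The itinerary $\iota(p)=w_0\cdots w_{n-1}\in\Gamma^n$ of $p\in\mathcal{T}_n$ is defined by $P^j(p)\in R_{w_j}$ for $0\le j<n$. *)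

From Stdlib Require Import Reals Lra.
Open Scope R_scope.

Definition pt := (R * R * R)%type.

Definition inC (p : pt) : Prop :=
  let '(a, b, c) := p in a >= b /\ b >= c /\ c > 0 /\ a + b + c = 1.

Definition inCstar (p : pt) : Prop :=
  let '(a, b, c) := p in inC p /\ a <> 1/2.

Definition inRegion (w : nat) (p : pt) : Prop :=
  let '(a, b, c) := p in
  inCstar p /\
  match w with
  | 0%nat => a < 1/2
  | 1%nat => 2*a - 1 >= 2*b /\ a > 1/2
  | 2%nat => 2*b > 2*a - 1 /\ 2*a - 1 >= 2*c /\ a > 1/2
  | 3%nat => 2*c > 2*a - 1 /\ a > 1/2
  | _ => False
  end.

(* The sorted pedal map P, extended to a total function on R^3 by the same
   case split; it agrees with P on Cstar; its values outside Cstar are never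
   used, since the statement requires P^j(p) to lie in Cstar. *)
Definition Pmap (p : pt) : pt :=
  let '(a, b, c) := p in
  if Rlt_dec a (1/2) then (1 - 2*c, 1 - 2*b, 1 - 2*a)
  else if Rge_dec (2*a - 1) (2*b) then (2*a - 1, 2*b, 2*c)
  else if Rge_dec (2*a - 1) (2*c) then (2*b, 2*a - 1, 2*c)
  else (2*b, 2*c, 2*a - 1).

Fixpoint Piter (j : nat) (p : pt) : pt :=
  match j with
  | O => p
  | S k => Pmap (Piter k p)
  end.

(* T_n: points of C of exact period n under P, with P^j(p) defined
   (i.e. P^j(p) in Cstar) for 0 <= j < n. *)
Definition inT (n : nat) (p : pt) : Prop :=
  inC p /\
  (forall j : nat, (j < n)%nat -> inCstar (Piter j p)) /\
  Piter n p = p /\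
  (forall d : nat, (1 <= d)%nat -> (d < n)%nat -> Piter d p <> p).

(* w is (a representative of) the itinerary of p of length n:
   P^j(p) lies in R_{w j} for 0 <= j < n. *)
Definition itinerary (n : nat) (p : pt) (w : nat -> nat) : Prop :=
  forall j : nat, (j < n)%nat -> inRegion (w j) (Piter j p).

From Stdlib Require Import Reals.
From Stdlib Require Import Lra Lia Classical.
Open Scope R_scope.

(* On R_1 and R_2 the pedal map doubles the smallest coordinate c.  An orbit
   staying in R_1 \/ R_2 therefore has c multiplied by 2^n after n steps, which
   is impossible for a periodic point since c > 0. *)

Lemma Pmap_snd_R12 (q : pt) :
  inRegion 1 q \/ inRegion 2 q -> snd (Pmap q) = 2 * snd q.
Proof.
  destruct q as [[a b] c]; simpl; intros H.
  destruct (Rlt_dec a (1/2)); [destruct H as [[_ H] | [_ H]]; lra |].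
  destruct (Rge_dec (2*a - 1) (2*b)); [reflexivity |].
  destruct (Rge_dec (2*a - 1) (2*c)); [reflexivity |].
  destruct H as [[_ H] | [_ H]]; lra.
Qed.

Lemma Piter_snd_R12 (k : nat) (p : pt) :
  (forall j, (j < k)%nat -> inRegion 1 (Piter j p) \/ inRegion 2 (Piter j p)) ->
  snd (Piter k p) = 2 ^ k * snd p.
Proof.
  induction k as [| k IH]; intros Hreg; simpl.
  - ring.
  - rewrite Pmap_snd_R12 by (apply Hreg; lia).
    rewrite IH by (intros j Hj; apply Hreg; lia).
    ring.
Qed.

Lemma periodic_not_all_R12 (n : nat) (p : pt) :
  (1 <= n)%nat -> inC p -> Piter n p = p ->
  ~ (forall j, (j < n)%nat -> inRegion 1 (Piter j p) \/ inRegion 2 (Piter j p)).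
Proof.
  intros Hn HC Hper Hreg.
  pose proof (Piter_snd_R12 n p Hreg) as Hc_scaled.
  rewrite Hper in Hc_scaled.
  destruct p as [[a b] c]; simpl in Hc_scaled.
  destruct HC as [_ [_ [Hc _]]].
  assert (H2n : 2 <= 2 ^ n).
  { replace n with (S (pred n)) by lia; simpl.
    assert (1 <= 2 ^ pred n) by (apply pow_R1_Rle; lra). lra. }
  nra.
Qed.

Theorem mainTheorem6 (n : nat) (p : pt) :
  (1 <= n)%nat -> inT n p ->
  forall w : nat -> nat, itinerary n p w ->
  exists j : nat, (j < n)%nat /\ w j <> 1%nat /\ w j <> 2%nat.
Proof.
  intros Hn [HC [_ [Hper _]]] w Hit.
  apply NNPP; intros Hnone.
  apply (periodic_not_all_R12 n p Hn HC Hper).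
  intros j Hj.
  specialize (Hit j Hj).
  destruct (Nat.eq_dec (w j) 1) as [E1 | E1]; [left; rewrite <- E1; exact Hit |].
  destruct (Nat.eq_dec (w j) 2) as [E2 | E2]; [right; rewrite <- E2; exact Hit |].
  exfalso; apply Hnone; exists j; auto.
Qed.
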